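(* Let $0<\alpha\le\beta$ with $\alpha\le1$, and let $\gamma:[0,1]\to\mathbb{R}^n$ be an $(\alpha,\beta)$-bi-Hölder curve with constant $1\le C_\gamma<\infty$. Then there exist $C=C(\alpha,\beta,C_\gamma,n)>0$ and $r_0=r_0(\beta,C_\gamma)>0$ such that for all $0<r<r_0$, $$\frac1C\, r^{\frac{\beta-1}{\beta}}\le \widehat\Lambda(B(\widehat\gamma,r),r)\le C\, r^{\frac{\alpha-1}{\alpha}}.$$
   Context: A map $\gamma:[0,1]\to\mathbb{R}^n$ is an $(\alpha,\beta)$-bi-Hölder curve with constant $C_\gamma\ge1$ if $\frac1{C_\gamma}|x-y|^\beta\le|\gamma(x)-\gamma(y)|\le C_\gamma|x-y|^\alpha$ for all $x,y\in[0,1]$. $\widehat\gamma:=\gamma([0,1])$. For $A\subset\mathbb{R}^n$, $B(A,r):=\{x:\mathrm{dist}(x,A)\le r\}$. The length of a curve $\sigma:[0,1]\to\mathbb{R}^n$ is $\ell(\sigma):=\sup\sum_{k=1}^N|\sigma(t_k)-\sigma(t_{k-1})|$, the supremum over all partitions $0=t_0<\dots<t_N=1$. For a compact $E$, $\widehat\Lambda(E,r):=\inf\{\ell(\sigma):\sigma:[0,1]\to\mathbb{R}^n \text{ Lipschitz with } B(\sigma([0,1]),r)\supset E\}$. *)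

From HB Require Import structures.
From mathcomp Require Import all_boot all_order all_algebra.
From mathcomp Require Import all_classical all_reals all_analysis.
Set Implicit Arguments. Unset Strict Implicit. Unset Printing Implicit Defensive.
Import Order.TTheory GRing.Theory Num.Theory.
Local Open Scope classical_set_scope.
Local Open Scope ring_scope.

Section Defs.
Variable R : realType.
Variable n : nat.

Definition eucl_norm (v : 'rV[R]_n) : R :=
  Num.sqrt (\sum_(i < n) (v ord0 i) ^+ 2).
Definition eucl_dist (x y : 'rV[R]_n) : R := eucl_norm (x - y).

Definition bi_holder (alpha beta Cg : R) (g : R -> 'rV[R]_n) : Prop :=
  forall x y, x \in `[0, 1] -> y \in `[0, 1] ->
    Cg^-1 * (`|x - y| `^ beta) <= eucl_dist (g x) (g y) /\
    eucl_dist (g x) (g y) <= Cg * (`|x - y| `^ alpha).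

Definition curve_image (g : R -> 'rV[R]_n) : set 'rV[R]_n := g @` `[0, 1]%classic.

(* dist(x, A) = inf_{a in A} |x - a|  (extended real; +oo for A empty) *)
Definition dist_set (x : 'rV[R]_n) (A : set 'rV[R]_n) : \bar R :=
  ereal_inf [set (eucl_dist x a)%:E | a in A].

Definition nbhd_closed (A : set 'rV[R]_n) (r : R) : set 'rV[R]_n :=
  [set x | (dist_set x A <= r%:E)%E].

Definition partition_sums (s : R -> 'rV[R]_n) : set (\bar R) :=
  [set v | exists (N : nat) (t : nat -> R),
     [/\ t 0%N = 0, t N = 1, (forall k, (k < N)%N -> t k < t k.+1) &
         v = (\sum_(k < N) eucl_dist (s (t k.+1)) (s (t k)))%:E] ].

Definition curve_length (s : R -> 'rV[R]_n) : \bar R :=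
  ereal_sup (partition_sums s).

Definition lipschitz01 (s : R -> 'rV[R]_n) : Prop :=
  exists L : R, forall x y, x \in `[0, 1] -> y \in `[0, 1] ->
    eucl_dist (s x) (s y) <= L * `|x - y|.

Definition Lambda_hat (E : set 'rV[R]_n) (r : R) : \bar R :=
  ereal_inf [set curve_length s | s in
    [set s : R -> 'rV[R]_n | lipschitz01 s /\
        E `<=` nbhd_closed (s @` `[0, 1]%classic) r]].

End Defs.

(* Upper bound: sample [g] at the [M ~ r^(-1/alpha)] points [j / M], so that
   consecutive samples are [r / 2] apart, and run a polygonal line through every
   sample translated by every point of a lattice of mesh [r / n.+1] filling the
   cube of half-side [2 r].  Every point of [B(g([0,1]), r)] is within [2 r] of a
   sample, hence within [r] of the line, whose length is [O(M r)].
   Lower bound: the [N ~ r^(-1/beta)] samples [g (j / N)] are [10 r] apart and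
   lie in [B(g([0,1]), r)], so any admissible curve passes within [2 r] of each;
   a walk that approaches [5 rho]-separated points to within [rho] travels
   at least [3 rho] per new point, so its length is [Omega(N r)]. *)

From HB Require Import structures.
From mathcomp Require Import all_boot all_order all_algebra.
From mathcomp Require Import all_classical all_reals all_analysis.
From mathcomp Require Import ring lra zify.

Set Implicit Arguments.
Unset Strict Implicit.
Unset Printing Implicit Defensive.
Import Order.TTheory GRing.Theory Num.Theory.

Local Open Scope ring_scope.

Section EuclideanNorm.
Variables (R : realType) (n : nat).
Implicit Types (u v w : 'rV[R]_n) (m : R).

Lemma sum_mul_sqr_le (a b : 'I_n -> R) :
  (\sum_i a i * b i) ^+ 2 <= (\sum_i a i ^+ 2) * (\sum_i b i ^+ 2).
Proof.
set A := \sum_i a i ^+ 2; set B := \sum_i b i ^+ 2; set C := \sum_i a i * b i.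
have B_ge0 : 0 <= B by apply: sumr_ge0 => i _; exact: sqr_ge0.
have [B0|B_neq0] := eqVneq B 0.
  have b0 i : b i = 0.
    apply/eqP; rewrite -sqrf_eq0; apply/eqP.
    by move/psumr_eq0P: B0 => -> // j _; exact: sqr_ge0.
  by rewrite /C big1 ?expr0n ?B0 ?mulr0 // => i _; rewrite b0 mulr0.
(* expand the nonnegative quantity [sum_i (B a_i - C b_i)^2] *)
have E : \sum_i (B * a i - C * b i) ^+ 2 = B * (A * B - C ^+ 2).
  under eq_bigr => i _ do rewrite sqrrB !exprMn.
  rewrite big_split /= sumrB /= -!mulr_sumr sumrMnl.
  have -> : \sum_i B * a i * (C * b i) = B * C * C.
    by rewrite /C mulr_sumr; apply: eq_bigr => i _; ring.
  rewrite -/A -/B; ring.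
have : 0 <= B * (A * B - C ^+ 2).
  by rewrite -E; apply: sumr_ge0 => i _; exact: sqr_ge0.
have : 0 < B by rewrite lt_def B_neq0 B_ge0.
nra.
Qed.

Definition eucl_sqnorm v := \sum_(i < n) (v ord0 i) ^+ 2.

Lemma eucl_sqnorm_ge0 v : 0 <= eucl_sqnorm v.
Proof. by apply: sumr_ge0 => i _; exact: sqr_ge0. Qed.

Lemma eucl_sqnormD u v : eucl_sqnorm (u + v) =
  eucl_sqnorm u + 2 * \sum_i u ord0 i * v ord0 i + eucl_sqnorm v.
Proof.
rewrite /eucl_sqnorm; under eq_bigr => i _ do rewrite mxE sqrrD.
by rewrite mulr_sumr -!big_split /=; apply: eq_bigr => i _; ring.
Qed.

Lemma eucl_normD u v : eucl_norm (u + v) <= eucl_norm u + eucl_norm v.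
Proof.
rewrite /eucl_norm -!/(eucl_sqnorm _).
set a := Num.sqrt (eucl_sqnorm u); set b := Num.sqrt (eucl_sqnorm v).
have a_ge0 : 0 <= a := sqrtr_ge0 _; have b_ge0 : 0 <= b := sqrtr_ge0 _.
have a2 : a ^+ 2 = eucl_sqnorm u by rewrite sqr_sqrtr ?eucl_sqnorm_ge0.
have b2 : b ^+ 2 = eucl_sqnorm v by rewrite sqr_sqrtr ?eucl_sqnorm_ge0.
set C := \sum_i u ord0 i * v ord0 i.
have C_le : `|C| <= a * b.
  rewrite -(@ler_pXn2r _ 2) ?nnegrE ?mulr_ge0 // real_normK ?num_real //.
  by rewrite exprMn a2 b2; exact: sum_mul_sqr_le.
have : eucl_sqnorm (u + v) <= (a + b) ^+ 2.
  by rewrite eucl_sqnormD -/C sqrrD a2 b2; have := ler_norm C; nra.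
rewrite -ler_sqrt ?sqr_ge0 // sqrtr_sqr ger0_norm //; exact: addr_ge0.
Qed.

Lemma eucl_normN v : eucl_norm (- v) = eucl_norm v.
Proof. by congr Num.sqrt; apply: eq_bigr => i _; rewrite mxE sqrrN. Qed.

Lemma eucl_normZ (c : R) v : eucl_norm (c *: v) = `|c| * eucl_norm v.
Proof.
rewrite /eucl_norm -sqrtr_sqr -sqrtrM ?sqr_ge0 // mulr_sumr.
by congr Num.sqrt; apply: eq_bigr => i _; rewrite mxE exprMn.
Qed.

Lemma eucl_norm0 : eucl_norm (0 : 'rV[R]_n) = 0.
Proof. by rewrite /eucl_norm big1 ?sqrtr0 // => i _; rewrite mxE expr0n. Qed.

Lemma eucl_norm_sum (k : nat) (F : nat -> 'rV[R]_n) :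
  eucl_norm (\sum_(i < k) F i) <= \sum_(i < k) eucl_norm (F i).
Proof.
elim: k => [|k IH]; first by rewrite !big_ord0 eucl_norm0.
by rewrite !big_ord_recr /=; apply: le_trans (eucl_normD _ _) _; rewrite lerD2r.
Qed.

Lemma eucl_norm_le_coord v m : (forall i, `|v ord0 i| <= m) ->
  eucl_norm v <= Num.sqrt (n%:R * m ^+ 2).
Proof.
move=> v_le; rewrite ler_sqrt; last by rewrite mulr_ge0 ?sqr_ge0.
rewrite -[n in n%:R]card_ord mulr_natl -sumr_const; apply: ler_sum => i _.
have m_ge0 : 0 <= m := le_trans (normr_ge0 _) (v_le i).
by rewrite -real_normK ?num_real // ler_pXn2r ?nnegrE.
Qed.

Lemma coord_le_eucl_norm v i : `|v ord0 i| <= eucl_norm v.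
Proof.
rewrite -sqrtr_sqr ler_sqrt ?eucl_sqnorm_ge0 // (bigD1 i) //= lerDl.
by apply: sumr_ge0 => j _; exact: sqr_ge0.
Qed.

Lemma eucl_dist_ge0 u v : 0 <= eucl_dist u v.
Proof. exact: sqrtr_ge0. Qed.

Lemma eucl_distC u v : eucl_dist u v = eucl_dist v u.
Proof. by rewrite /eucl_dist -eucl_normN opprB. Qed.

Lemma eucl_dist_triangle u v w : eucl_dist u w <= eucl_dist u v + eucl_dist v w.
Proof. by rewrite /eucl_dist -[u - w](subrKA v); exact: eucl_normD. Qed.

Lemma eucl_distxx u : eucl_dist u u = 0.
Proof. by rewrite /eucl_dist subrr eucl_norm0. Qed.

Lemma eucl_distDD u v x y :
  eucl_dist (u + x) (v + y) <= eucl_dist u v + eucl_norm x + eucl_norm y.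
Proof.
rewrite /eucl_dist opprD addrACA -(eucl_normN y); apply: le_trans (eucl_normD _ _) _.
by rewrite -addrA lerD2l eucl_normD.
Qed.

End EuclideanNorm.

Section Clamp.
Variable R : realType.
Implicit Types c u x y : R.

Definition clamp c x := Num.min (Num.max x 0) c.

Local Ltac clamp_cases :=
  rewrite /clamp ?maxEle; repeat (case: ifPn; rewrite -?ltNge => ?);
  rewrite ?minEle; repeat (case: ifPn; rewrite -?ltNge => ?); lra.

Lemma clamp0 u : clamp 0 u = 0.
Proof. clamp_cases. Qed.

Lemma clampS u (m : nat) : clamp m%:R u + clamp 1 (u - m%:R) = clamp m.+1%:R u.
Proof. have m_ge0 : (0 : R) <= m%:R := ler0n R m; rewrite -natr1; clamp_cases. Qed.

Lemma sum_clamp1 u (m : nat) : \sum_(k < m) clamp 1 (u - k%:R) = clamp m%:R u.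
Proof.
elim: m => [|m IH]; first by rewrite big_ord0 clamp0.
by rewrite big_ord_recr /= IH clampS.
Qed.

Lemma le_clamp c x y : x <= y -> clamp c x <= clamp c y.
Proof. clamp_cases. Qed.

Lemma clamp_subr_le c x y : x <= y -> clamp c y - clamp c x <= y - x.
Proof. clamp_cases. Qed.

Lemma clamp_ge c x : c <= x -> clamp c x = c.
Proof. clamp_cases. Qed.

Lemma clamp_le0 c x : 0 <= c -> x <= 0 -> clamp c x = 0.
Proof. clamp_cases. Qed.

End Clamp.

Section Polygonal.
Variables (R : realType) (n : nat).

(* The polygonal curve through [P 0, ..., P m], the segment [P k, P k.+1] being
   travelled for [t] in [[k / m, k.+1 / m]]. *)
Definition polygonal (P : nat -> 'rV[R]_n) (m : nat) (t : R) : 'rV[R]_n :=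
  P 0%N + \sum_(k < m) clamp 1 (m%:R * t - k%:R) *: (P k.+1 - P k).

Lemma polygonal_lipschitz (P : nat -> 'rV[R]_n) (m : nat) (D : R) : 0 <= D ->
  (forall k, (k < m)%N -> eucl_dist (P k.+1) (P k) <= D) ->
  forall x y, eucl_dist (polygonal P m x) (polygonal P m y) <= m%:R * D * `|x - y|.
Proof.
move=> D_ge0 PD x y; wlog xy : x y / x <= y.
  move=> hwlog; have [|/ltW] := leP x y; first exact: hwlog.
  by rewrite eucl_distC distrC; exact: hwlog.
pose w k := clamp 1 (m%:R * y - k%:R) - clamp 1 (m%:R * x - k%:R).
have w_ge0 k : 0 <= w k by rewrite subr_ge0 le_clamp // lerD2r ler_wpM2l.
rewrite eucl_distC /eucl_dist /polygonal opprD addrACA subrr add0r -sumrB.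
under eq_bigr => k _ do rewrite -scalerBl -/(w k).
apply: le_trans (eucl_norm_sum m (fun k => w k *: (P k.+1 - P k))) _.
apply: (@le_trans _ _ (\sum_(k < m) w k * D)).
  by apply: ler_sum => k _; rewrite eucl_normZ ger0_norm // ler_wpM2l // PD.
rewrite -mulr_suml sumrB !sum_clamp1 distrC ger0_norm ?subr_ge0 //.
have := clamp_subr_le m%:R (ler_wpM2l (ler0n R m) xy).
have := ler0n R m; nra.
Qed.

Lemma polygonal_node (P : nat -> 'rV[R]_n) (m j : nat) : (0 < m)%N -> (j <= m)%N ->
  polygonal P m (j%:R / m%:R) = P j.
Proof.
move=> m_gt0 jm; rewrite /polygonal mulrC divfK ?pnatr_eq0 -?lt0n //.
rewrite -(big_mkord xpredT (fun k => clamp 1 (j%:R - k%:R) *: (P k.+1 - P k))).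
rewrite (@big_cat_nat _ _ _ j 0 m _ _ (leq0n j) jm) /= [X in _ + (_ + X)]big1_seq ?addr0; last first.
  move=> k /andP[_]; rewrite mem_index_iota => /andP[jk _].
  by rewrite clamp_le0 ?scale0r // subr_le0 ler_nat.
rewrite (@eq_big_seq _ _ _ _ _ _ (fun k => P k.+1 - P k)); last first.
  move=> k; rewrite mem_index_iota => /andP[_ kj].
  by rewrite clamp_ge ?scale1r // -natrB ?ler1n ?subn_gt0 // ltnW.
by rewrite telescope_sumr // addrC subrK.
Qed.

End Polygonal.

(* A walk [q 0, q 1, ...] coming [rho]-close to each of a family of
   [5 rho]-separated points [y j] has length at least about [3 rho] per point:
   the induction keeps track of the last point visited. *)
Section Visits.
Variables (R : realType) (n : nat) (I : finType).
Variables (q : nat -> 'rV[R]_n) (y : I -> 'rV[R]_n) (rho : R).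
Hypothesis rho_gt0 : 0 < rho.
Hypothesis y_sep : forall a b, a != b -> 5 * rho <= eucl_dist (y a) (y b).

Definition visited k := [set j | [exists i : 'I_k.+1, eucl_dist (q i) (y j) <= rho]].
Definition near k := [set j | eucl_dist (q k) (y j) <= rho].
Definition walk_length k := \sum_(i < k) eucl_dist (q i.+1) (q i).

Local Notation walk_bound k j :=
  (3 * rho * ((#|visited k|)%:R - 1) + eucl_dist (q k) (y j) - rho <= walk_length k).

Lemma card_near_le1 k : (#|near k| <= 1)%N.
Proof.
rewrite leqNgt; apply/card_gt1P => -[a [b [ha hb ab]]].
rewrite !inE in ha hb; suff : rho <= 0 by rewrite leNgt rho_gt0.
have := y_sep ab; have := eucl_dist_triangle (y a) (q k) (y b).
by rewrite (eucl_distC (y a) (q k)); lra.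
Qed.

Lemma visitedS k : visited k.+1 = visited k :|: near k.+1.
Proof.
apply/setP => j; rewrite /visited /near !inE; apply/existsP/orP => [[i]|[/existsP[i]|]].
- have [ik|ik] := ltnP i k.+1; first by left; apply/existsP; exists (Ordinal ik).
  have -> : nat_of_ord i = k.+1 by apply/eqP; rewrite eqn_leq ik -ltnS ltn_ord.
  by right.
- by exists (widen_ord (leqnSn _) i).
- by exists ord_max.
Qed.

Lemma walk_lengthS k : walk_length k.+1 = walk_length k + eucl_dist (q k.+1) (q k).
Proof. by rewrite /walk_length big_ord_recr. Qed.

Lemma walk_length_ge0 k : 0 <= walk_length k.
Proof. by apply: sumr_ge0 => i _; exact: eucl_dist_ge0. Qed.

Lemma walk_bound_near k j : visited k \subset near k -> j \in visited k -> walk_bound k j.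
Proof.
move=> sub_near jk; have := walk_length_ge0 k.
have : ((#|visited k|)%:R <= 1 :> R).
  by rewrite lern1; exact: leq_trans (subset_leq_card sub_near) (card_near_le1 k).
move=> card_le1; have /fintype.subsetP/(_ j jk) := sub_near; rewrite inE.
have : 0 <= rho * (1 - #|visited k|%:R) by rewrite mulr_ge0 ?subr_ge0 // ltW.
lra.
Qed.

Lemma walk_boundS k j0 : j0 \in visited k -> walk_bound k j0 ->
  exists2 j, j \in visited k.+1 & walk_bound k.+1 j.
Proof.
move=> j0k IH; have := eucl_dist_ge0 (q k.+1) (q k).
have := eucl_dist_triangle (q k.+1) (q k) (y j0).
rewrite walk_lengthS visitedS.
have [sub|/fintype.subsetPn[j jnear jk]] := boolP (near k.+1 \subset visited k).
  exists j0; first by rewrite inE j0k.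
  by rewrite (finset.setUidPl sub); lra.
exists j; first by rewrite inE jnear orbT.
have : (#|visited k :|: near k.+1|%:R <= (#|visited k|)%:R + 1 :> R).
  rewrite natr1 ler_nat; apply: leq_trans (leq_card_setU _ _) _.
  by rewrite -[X in (_ <= X)%N]addn1 leq_add2l; exact: card_near_le1.
have j0j : j0 != j by apply: contraNneq jk => <-.
have := y_sep j0j; have := eucl_dist_triangle (y j0) (q k.+1) (y j).
rewrite inE in jnear; rewrite (eucl_distC (y j0) (q k.+1)).
set w := (#|_|)%:R; set w0 := (#|_|)%:R in IH *; move=> ? ? w_le.
have : 0 <= rho * (w0 + 1 - w) by rewrite mulr_ge0 ?subr_ge0 // ltW.
lra.
Qed.

Lemma walk_bound_visited k j : j \in visited k ->
  exists2 j', j' \in visited k & walk_bound k j'.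
Proof.
elim: k j => [|k IH] j jk.
  exists j => //; apply: walk_bound_near jk; apply/fintype.subsetP => i.
  by rewrite !inE => /existsP[i0]; rewrite (ord1 i0).
have [/existsP[j0 /IH[j1]]|/existsPn none] := boolP [exists j0, j0 \in visited k].
  exact: walk_boundS.
exists j => //; apply: walk_bound_near jk; rewrite visitedS.
by apply/fintype.subsetP => i; rewrite inE (negbTE (none i)).
Qed.

Lemma walk_length_ge_visits K :
  (forall j, exists2 i, (i <= K)%N & eucl_dist (q i) (y j) <= rho) ->
  3 * rho * (#|I|%:R - 1) - rho <= walk_length K.
Proof.
move=> visits; have := walk_length_ge0 K.
have [j0 _|I0] := pickP (@predT I); last first.
  by rewrite (eq_card0 I0); have := rho_gt0; lra.
have visitedT : visited K = [set: I].
  apply/setP => j; rewrite !inE; have [i iK ij] := visits j.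
  by apply/existsP; exists (Ordinal (iK : (i < K.+1)%N)).
have j0K : j0 \in visited K by rewrite visitedT inE.
have [j _] := walk_bound_visited j0K.
rewrite visitedT cardsT; have := eucl_dist_ge0 (q K) (y j); lra.
Qed.

End Visits.

Local Open Scope classical_set_scope.
Local Open Scope ring_scope.

Section Grids.
Variable R : realType.

Lemma grid_point_in01 (j M : nat) : (j <= M)%N -> (j%:R / M%:R : R) \in `[0, 1].
Proof.
move=> jM; rewrite in_itv /= divr_ge0 ?ler0n //=.
have [->|M_gt0] := posnP M; first by rewrite invr0 mulr0.
by rewrite ler_pdivrMr ?ltr0n // mul1r ler_nat.
Qed.

Lemma nearest_grid_point (t : R) (M : nat) : (0 < M)%N -> t \in `[0, 1] ->
  exists2 j : nat, (j <= M)%N & `|t - j%:R / M%:R| <= M%:R^-1.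
Proof.
rewrite in_itv /= => M_gt0 /andP[t_ge0 t_le1].
have M_pos : (0 : R) < M%:R by rewrite ltr0n.
have tM_ge0 : 0 <= t * M%:R by rewrite mulr_ge0 // ler0n.
have /andP[tr_le tr_gt] := Num.Theory.truncn_itv tM_ge0.
exists (Num.truncn (t * M%:R)).
  by rewrite -(ler_nat R); apply: le_trans tr_le _; rewrite ler_piMl.
have -> : t - (Num.truncn (t * M%:R))%:R / M%:R =
          (t * M%:R - (Num.truncn (t * M%:R))%:R) / M%:R.
  by field; exact: lt0r_neq0.
rewrite normrM [`|M%:R^-1|]gtr0_norm ?invr_gt0 //; apply: ler_piMl; first by rewrite invr_ge0 ltW.
by rewrite ger0_norm ?subr_ge0 //; rewrite -natr1 in tr_gt; lra.
Qed.

Lemma grid_points_dist_ge (i j M : nat) : i != j ->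
  M%:R^-1 <= `|i%:R / M%:R - j%:R / M%:R : R|.
Proof.
move=> ij; rewrite -mulrBl normrM [`|_^-1|]ger0_norm ?invr_ge0 ?ler0n //.
rewrite ler_peMl ?invr_ge0 ?ler0n //.
have [lt_ij|lt_ji|eq_ij] := ltngtP i j; last by rewrite eq_ij eqxx in ij.
  have : (i%:R + 1 <= j%:R :> R) by rewrite natr1 ler_nat.
  by rewrite distrC ger0_norm ?subr_ge0 ?ler_nat ?(ltnW lt_ij) //; lra.
have : (j%:R + 1 <= i%:R :> R) by rewrite natr1 ler_nat.
by rewrite ger0_norm ?subr_ge0 ?ler_nat ?(ltnW lt_ji) //; lra.
Qed.

(* Rounding [u / d] to the nearest integer, shifted by [K] to land in [0, 2K]. *)
Lemma round_to_lattice (d u : R) (K : nat) : 0 < d -> `|u| <= K%:R * d ->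
  let t := Num.truncn (u / d + K%:R + 2^-1) in
  (t < (K + K).+1)%N /\ `|u - d * (t%:R - K%:R)| <= d / 2.
Proof.
move=> d_gt0 u_le t; set v := u / d + K%:R + 2^-1.
have : `|u / d| <= K%:R.
  by rewrite normrM [`|d^-1|]gtr0_norm ?invr_gt0 // ler_pdivrMr.
rewrite ler_norml => /andP[ud_ge ud_le].
have /andP[t_le t_gt] : (t%:R <= v < t.+1%:R) by apply: Num.Theory.truncn_itv; lra.
rewrite -natr1 in t_gt; split.
  by rewrite -(ltr_nat R) -natr1 natrD; rewrite /v in t_le t_gt; lra.
have -> : u - d * (t%:R - K%:R) = d * (v - 2^-1 - t%:R).
  by rewrite /v; field; exact: lt0r_neq0.
rewrite normrM gtr0_norm // ler_pM2l // ler_norml; apply/andP; split; lra.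
Qed.

End Grids.

Lemma powR_subn1_div (R : realType) (r a : R) : 0 < r -> a != 0 ->
  r `^ ((a - 1) / a) = r / r `^ a^-1.
Proof.
move=> r_gt0 a_neq0; have -> : (a - 1) / a = 1 + - a^-1 by field.
by rewrite powRD ?(lt0r_neq0 r_gt0) ?implybT // powRr1 ?powRN // ltW.
Qed.

Section CurveLength.
Variables (R : realType) (n : nat).
Implicit Types (E : set 'rV[R]_n) (s : R -> 'rV[R]_n).

Lemma nbhd_closed_dist E r x a : E a -> eucl_dist x a <= r -> nbhd_closed E r x.
Proof.
move=> Ea xa; apply: ge_ereal_inf; exists (eucl_dist x a)%:E; first by exists a.
by rewrite lee_fin.
Qed.

Lemma nbhd_closed_lt E r e x : nbhd_closed E r x -> 0 < e ->
  exists2 a, E a & eucl_dist x a < r + e.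
Proof.
move=> xE e_gt0; have : (dist_set x E < (r + e)%:E)%E.
  by apply: le_lt_trans xE _; rewrite lte_fin ltrDl.
by move=> /ereal_inf_lt[_ [a Ea <-]]; rewrite lte_fin; exists a.
Qed.

Lemma curve_length_le_lipschitz s L : 0 <= L ->
  (forall x y, eucl_dist (s x) (s y) <= L * `|x - y|) -> (curve_length s <= L%:E)%E.
Proof.
move=> L_ge0 s_lip; apply: ge_ereal_sup => _ [N [t [t0 tN t_incr ->]]].
rewrite lee_fin; apply: (@le_trans _ _ (\sum_(k < N) L * (t k.+1 - t k))).
  apply: ler_sum => k _; apply: le_trans (s_lip _ _) _.
  by rewrite ger0_norm // subr_ge0 ltW // t_incr.
rewrite -mulr_sumr -(big_mkord xpredT (fun k => t k.+1 - t k)) telescope_sumr //.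
by rewrite tN t0 subr0 mulr1.
Qed.

Lemma Lambda_hat_le_lipschitz E r s L : 0 <= L ->
  (forall x y, eucl_dist (s x) (s y) <= L * `|x - y|) ->
  E `<=` nbhd_closed (s @` `[0, 1]) r -> (Lambda_hat E r <= L%:E)%E.
Proof.
move=> L_ge0 s_lip E_cov; apply: ge_ereal_inf; exists (curve_length s).
  by exists s => //; split => //; exists L => x y _ _; exact: s_lip.
exact: curve_length_le_lipschitz.
Qed.

Lemma uniform_partition_le_length s (K : nat) : (0 < K)%N ->
  ((\sum_(i < K) eucl_dist (s (i.+1%:R / K%:R)) (s (i%:R / K%:R)))%:E
    <= curve_length s)%E.
Proof.
move=> K_gt0; apply: ereal_sup_ubound; exists K, (fun i : nat => i%:R / K%:R).
split => //; first by rewrite mul0r.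
  by rewrite divff // pnatr_eq0 -lt0n.
by move=> k _; rewrite ltr_pM2r ?invr_gt0 ?ltr0n // ltr_nat.
Qed.

End CurveLength.

Section BiHolder.
Variables (R : realType) (n : nat) (alpha beta Cg : R) (g : R -> 'rV[R]_n).
Hypotheses (Cg_ge0 : 0 <= Cg) (g_holder : bi_holder alpha beta Cg g).

Lemma bi_holder_le_mesh x y X : 0 < alpha -> x \in `[0, 1] -> y \in `[0, 1] ->
  `|x - y| <= X -> eucl_dist (g x) (g y) <= Cg * X `^ alpha.
Proof.
move=> alpha_gt0 x01 y01 xyX; apply: le_trans (g_holder x01 y01).2 _.
have X_ge0 : 0 <= X := le_trans (normr_ge0 _) xyX.
by rewrite ler_wpM2l // ge0_ler_powR // ?nnegrE // ltW.
Qed.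

Lemma bi_holder_ge_mesh x y X : 0 < beta -> 0 <= X -> x \in `[0, 1] -> y \in `[0, 1] ->
  X <= `|x - y| -> Cg^-1 * X `^ beta <= eucl_dist (g x) (g y).
Proof.
move=> beta_gt0 X_ge0 x01 y01 Xxy; apply: le_trans (g_holder x01 y01).1.
by rewrite ler_wpM2l ?invr_ge0 // ge0_ler_powR // ?nnegrE // ltW.
Qed.

End BiHolder.

Section Lattice.
Variables (R : realType) (n : nat).

(* Points of the cubical lattice of mesh [d] with [2 K + 1] points per side,
   centred at the origin; [K] is chosen so that the cube has half-side [2 r]
   for [d = r / n.+1]. *)
Definition lattice_radius : nat := (2 * n.+1)%N.
Local Notation K := lattice_radius.
Definition lattice := {ffun 'I_n -> 'I_(K + K).+1}.

Definition lattice_point (d : R) (z : lattice) : 'rV[R]_n :=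
  \row_i (d * ((z i)%:R - K%:R)).

Lemma sqrt_mul_sqr_le (c : R) : 0 <= c -> Num.sqrt (n%:R * c ^+ 2) <= n.+1%:R * c.
Proof.
move=> c_ge0; rewrite -[X in _ <= X]ger0_norm ?mulr_ge0 ?ler0n // -sqrtr_sqr.
rewrite ler_sqrt ?sqr_ge0 // exprMn ler_wpM2r ?sqr_ge0 //.
by rewrite -natrX ler_nat expnS expn1 (leq_trans (leqnSn n)) // leq_pmulr.
Qed.

Lemma lattice_point_norm_le (r : R) z : 0 < r ->
  eucl_norm (lattice_point (r / n.+1%:R) z) <= r * K%:R.
Proof.
move=> r_gt0; set d := r / n.+1%:R.
have d_gt0 : 0 < d by rewrite divr_gt0 ?ltr0n.
apply: le_trans (eucl_norm_le_coord (m := d * K%:R) _) _.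
  move=> i; rewrite mxE normrM gtr0_norm // ler_wpM2l ?(ltW d_gt0) //.
  have : (z i)%:R <= K%:R + K%:R :> R by rewrite -natrD ler_nat -ltnS.
  by have := ler0n R (z i); rewrite ler_norml; lra.
apply: le_trans (sqrt_mul_sqr_le _) _; first by rewrite mulr_ge0 ?ler0n ?ltW.
by rewrite (_ : n.+1%:R * (d * K%:R) = r * K%:R) // /d; field.
Qed.

Lemma lattice_point_near (r : R) w : 0 < r -> eucl_norm w <= 2 * r ->
  exists z, eucl_norm (w - lattice_point (r / n.+1%:R) z) <= r.
Proof.
move=> r_gt0 w_le; set d := r / n.+1%:R.
have d_gt0 : 0 < d by rewrite divr_gt0 ?ltr0n.
have w_coord i : `|w ord0 i| <= K%:R * d.
  rewrite (_ : K%:R * d = 2 * r); first exact: le_trans (coord_le_eucl_norm _ _) w_le.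
  by rewrite /d /K natrM; field.
pose t i := Num.truncn (w ord0 i / d + K%:R + 2^-1).
exists [ffun i => inord (t i)].
apply: le_trans (eucl_norm_le_coord (m := d / 2) _) _.
  move=> i; have [t_lt t_near] := round_to_lattice d_gt0 (w_coord i).
  by rewrite !mxE ffunE inordK.
apply: le_trans (sqrt_mul_sqr_le _) _; first by rewrite divr_ge0 ?ltW.
rewrite (_ : n.+1%:R * (d / 2) = r / 2); first lra.
by rewrite /d; field.
Qed.

End Lattice.

Section Interleave.
Variables (R : realType) (n : nat) (c : nat -> 'rV[R]_n) (o : seq 'rV[R]_n).

Definition interleave (k : nat) : 'rV[R]_n := c (k %/ size o) + o`_(k %% size o).

Lemma interleave_at j i : (i < size o)%N -> interleave (j * size o + i) = c j + o`_i.
Proof.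
move=> io; have o_gt0 : (0 < size o)%N := leq_ltn_trans (leq0n i) io.
by rewrite /interleave divnMDl // divn_small // addn0 modnMDl modn_small.
Qed.

Lemma interleave_step (M : nat) (a b : R) k : 0 <= a -> 0 <= b ->
  (forall j, (j < M)%N -> eucl_dist (c j.+1) (c j) <= a) ->
  (forall v, v \in o -> eucl_norm v <= b) ->
  (k.+1 < M.+1 * size o)%N -> eucl_dist (interleave k.+1) (interleave k) <= a + 2 * b.
Proof.
move=> a_ge0 b_ge0 c_step o_le kM; have o_gt0 : (0 < size o)%N by case: (size o) kM; rewrite ?muln0.
have o_nth i : eucl_norm o`_i <= b.
  by have [/(mem_nth 0)/o_le //|/(nth_default 0) ->] := ltnP i (size o); rewrite eucl_norm0.
apply: le_trans (eucl_distDD _ _ _ _) _; rewrite -addrA lerD //; last first.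
  by have := o_nth (k.+1 %% size o)%N; have := o_nth (k %% size o)%N; lra.
rewrite -(ltn_divLR _ _ o_gt0) (divnS _ o_gt0) in kM.
rewrite /interleave (divnS _ o_gt0); case: (size o %| k.+1)%N kM => /= kM.
  by rewrite add1n in kM *; exact: c_step.
by rewrite add0n eucl_distxx.
Qed.

End Interleave.

Section Mesh.
Variable R : realType.

Definition mesh_count (a e : R) : nat := (Num.truncn (e `^ a^-1)^-1).+1.

Lemma mesh_count_pow_le (a e : R) : 0 < a -> 0 < e -> (mesh_count a e)%:R^-1 `^ a <= e.
Proof.
move=> a_gt0 e_gt0; set X := e `^ a^-1.
have X_gt0 : 0 < X by rewrite powR_gt0.
have Xi_ge0 : 0 <= X^-1 by rewrite invr_ge0 ltW.
have /andP[_ lt_M] := Num.Theory.truncn_itv Xi_ge0.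
apply: (@le_trans _ _ (X `^ a)); last first.
  by rewrite /X -powRrM mulVf ?lt0r_neq0 // powRr1 // ltW.
apply: ge0_ler_powR; rewrite ?nnegrE ?invr_ge0 ?ler0n ?(ltW a_gt0) ?(ltW X_gt0) //.
by rewrite -[X in _ <= X]invrK lef_pV2 ?posrE ?invr_gt0 ?ltr0n // ltW.
Qed.

Lemma mesh_count_le (a e : R) : 0 < e -> (mesh_count a e)%:R <= (e `^ a^-1)^-1 + 1.
Proof.
move=> e_gt0; rewrite -natr1 lerD2r.
have Xi_ge0 : 0 <= (e `^ a^-1)^-1 by rewrite invr_ge0 powR_ge0.
by have /andP[] := Num.Theory.truncn_itv Xi_ge0.
Qed.

End Mesh.

Section UpperBound.
Variables (R : realType) (n : nat) (alpha beta Cg r : R) (g : R -> 'rV[R]_n).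
Hypotheses (Cg_ge1 : 1 <= Cg) (alpha_gt0 : 0 < alpha).
Hypotheses (g_holder : bi_holder alpha beta Cg g) (r_gt0 : 0 < r) (r_lt1 : r < 1).

Local Notation K := (lattice_radius n).

Definition upper_const : R := #|lattice n|%:R * (K + K)%N.+1%:R *
  (((2 * Cg)^-1 `^ alpha^-1)^-1 + 2).

Local Notation M := (mesh_count alpha (r / (2 * Cg))).
Local Notation c := (fun j : nat => g (j%:R / M%:R)).
Local Notation offsets := [seq lattice_point (r / n.+1%:R) z | z <- enum (lattice n)].
Local Notation m := (M.+1 * size offsets).-1.
Local Notation D := (r / 2 + 2 * (r * K%:R)).
Local Notation path := (polygonal (interleave c offsets) m).

Let Cg_gt0 : 0 < Cg. Proof. by apply: lt_le_trans Cg_ge1. Qed.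

Lemma upper_const_gt0 : 0 < upper_const.
Proof.
rewrite !mulr_gt0 ?ltr0n //; first by apply/card_gt0P; exists [ffun=> ord0].
by rewrite ltr_wpDl ?invr_ge0 ?powR_ge0.
Qed.

Let size_offsets : size offsets = #|lattice n|.
Proof. by rewrite size_map -cardE. Qed.

Let size_offsets_gt0 : (0 < size offsets)%N.
Proof. by rewrite size_offsets; apply/card_gt0P; exists [ffun=> ord0]. Qed.

Let rCg_gt0 : 0 < r / (2 * Cg). Proof. by rewrite divr_gt0 ?mulr_gt0. Qed.

Lemma mesh_close x y : x \in `[0, 1] -> y \in `[0, 1] -> `|x - y| <= M%:R^-1 ->
  eucl_dist (g x) (g y) <= r / 2.
Proof.
move=> x01 y01 xy; apply: le_trans (bi_holder_le_mesh (ltW Cg_gt0) g_holder _ _ _ xy) _ => //.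
apply: (@le_trans _ _ (Cg * (r / (2 * Cg)))).
  by rewrite ler_wpM2l ?(ltW Cg_gt0) // mesh_count_pow_le.
by rewrite (_ : Cg * (r / (2 * Cg)) = r / 2) //; field; exact: lt0r_neq0.
Qed.

Lemma path_lipschitz x y : eucl_dist (path x) (path y) <= m%:R * D * `|x - y|.
Proof.
have K_ge0 : (0 : R) <= K%:R := ler0n _ _.
apply: polygonal_lipschitz => [|k km]; first by rewrite addr_ge0 ?mulr_ge0 ?divr_ge0 ?(ltW r_gt0).
apply: (interleave_step (M := M)); rewrite ?divr_ge0 ?mulr_ge0 ?(ltW r_gt0) //.
- move=> j jM; apply: mesh_close; rewrite ?grid_point_in01 ?(ltnW jM) //.
  by rewrite -mulrBl -natrB // subSnn mul1r ger0_norm ?invr_ge0 ?ler0n.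
- by move=> _ /mapP[z _ ->]; exact: lattice_point_norm_le.
- by rewrite -ltn_predRL.
Qed.

Lemma path_covers :
  nbhd_closed (curve_image g) r `<=` nbhd_closed (path @` `[0, 1]) r.
Proof.
have M_gt0 : (0 < M)%N by [].
have p_gt0 := size_offsets_gt0.
have r2_gt0 : 0 < r / 2 by rewrite divr_gt0.
move=> x /nbhd_closed_lt/(_ r2_gt0)[_ [t t01 <-] xt].
have [j jM tj] := nearest_grid_point M_gt0 t01.
have tc := mesh_close t01 (grid_point_in01 R jM) tj.
have [z xz] : exists z, eucl_norm (x - c j - lattice_point (r / n.+1%:R) z) <= r.
  apply: lattice_point_near => //; have := eucl_dist_triangle x (g t) (c j).
  by move: xt tc; rewrite /eucl_dist; lra.
set i := index z (enum (lattice n)).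
have i_lt : (i < size (enum (lattice n)))%N by rewrite index_mem mem_enum.
have ip : (i < size offsets)%N by rewrite size_map.
have offset_i : offsets`_i = lattice_point (r / n.+1%:R) z.
  by rewrite (nth_map z) // nth_index ?mem_enum.
have m_gt0 : (0 < m)%N by rewrite -ltnS prednK ?muln_gt0 //; nia.
have km : (j * size offsets + i <= m)%N by rewrite -ltnS prednK ?muln_gt0 //; nia.
apply: (nbhd_closed_dist (a := path ((j * size offsets + i)%:R / m%:R))).
  by exists ((j * size offsets + i)%:R / m%:R) => //; exact: grid_point_in01.
by rewrite polygonal_node // interleave_at // offset_i /eucl_dist opprD addrA.
Qed.

Lemma path_lipschitz_const_le : m%:R * D <= upper_const * r `^ ((alpha - 1) / alpha).
Proof.
set A := r `^ alpha^-1; set B := (2 * Cg)^-1 `^ alpha^-1.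
set p : R := #|lattice n|%:R; set q : R := (K + K)%N.+1%:R.
have A_gt0 : 0 < A by rewrite powR_gt0.
have B_gt0 : 0 < B by rewrite powR_gt0 // invr_gt0 mulr_gt0.
have Ai_ge1 : 1 <= A^-1.
  rewrite invf_ge1 //; apply: (@le_trans _ _ (1 `^ alpha^-1)); last by rewrite powR1.
  apply: ge0_ler_powR; rewrite ?nnegrE ?invr_ge0 ?ler01 ?(ltW alpha_gt0) ?(ltW r_gt0) //.
  exact: ltW.
have M_le : M%:R + 1 <= A^-1 * (B^-1 + 2).
  have : M%:R <= A^-1 * B^-1 + 1.
    rewrite -invfM -powRM ?invr_ge0 ?mulr_ge0 ?(ltW r_gt0) ?(ltW Cg_gt0) //.
    exact: mesh_count_le.
  have : 0 < B^-1 by rewrite invr_gt0.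
  by move: Ai_ge1; nra.
have m_le : m%:R <= (M%:R + 1) * p by rewrite natr1 -natrM ler_nat -size_offsets leq_pred.
have D_ge0 : 0 <= D by rewrite addr_ge0 ?mulr_ge0 ?divr_ge0 ?ler0n ?(ltW r_gt0).
have D_le : D <= r * q.
  by rewrite /q -[(K + K)%N.+1%:R]natr1 natrD; move: r_gt0 (ler0n R K); lra.
apply: le_trans (ler_pM (ler0n _ _) D_ge0 m_le D_le) _.
rewrite powR_subn1_div ?lt0r_neq0 // -/A /upper_const -/p -/q.
rewrite (_ : p * q * _ * (r / A) = A^-1 * (B^-1 + 2) * p * (r * q)); last by ring.
by rewrite !ler_wpM2r ?mulr_ge0 ?ler0n ?(ltW r_gt0).
Qed.

Lemma upper_bound : (Lambda_hat (nbhd_closed (curve_image g) r) r <=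
  (upper_const * r `^ ((alpha - 1) / alpha))%:E)%E.
Proof.
apply: le_trans (Lambda_hat_le_lipschitz _ path_lipschitz path_covers) _.
  by rewrite mulr_ge0 ?addr_ge0 ?mulr_ge0 ?divr_ge0 ?ler0n ?(ltW r_gt0).
by rewrite lee_fin path_lipschitz_const_le.
Qed.

End UpperBound.

Section LowerBound.
Variables (R : realType) (n : nat) (alpha beta Cg r : R) (g : R -> 'rV[R]_n).
Hypotheses (Cg_ge1 : 1 <= Cg) (beta_gt0 : 0 < beta) (g_holder : bi_holder alpha beta Cg g).
Hypotheses (r_gt0 : 0 < r) (r_small : 10 * Cg * r < 1).

Definition lower_const : R := (10 * Cg) `^ beta^-1.

Local Notation X := ((10 * Cg * r) `^ beta^-1).
Local Notation N := (Num.truncn X^-1).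
Local Notation sample j := (g ((j : 'I_N.+1)%:R / N%:R)).

Let Cg_gt0 : 0 < Cg. Proof. by apply: lt_le_trans Cg_ge1. Qed.

Let X_gt0 : 0 < X. Proof. by rewrite powR_gt0 // !mulr_gt0. Qed.

Let X_le1 : X <= 1.
Proof.
apply: (@le_trans _ _ (1 `^ beta^-1)); last by rewrite powR1.
apply: ge0_ler_powR; rewrite ?nnegrE ?invr_ge0 ?ler01 ?(ltW beta_gt0) ?(ltW r_small) //.
by rewrite !mulr_ge0 ?(ltW Cg_gt0) ?(ltW r_gt0).
Qed.

Let N_bounds : (N%:R <= X^-1 < N%:R + 1).
Proof. by rewrite natr1; apply: Num.Theory.truncn_itv; rewrite invr_ge0 ltW. Qed.

Let N_gt0 : (0 < N)%N.
Proof. by rewrite Num.Theory.truncn_gt0 invf_ge1. Qed.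

Lemma samples_separated (a b : 'I_N.+1) : a != b ->
  5 * (2 * r) <= eucl_dist (sample a) (sample b).
Proof.
move=> ab; have N_pos : (0 : R) < N%:R by rewrite ltr0n.
have X_le : X <= N%:R^-1.
  by rewrite -[X in X <= _]invrK lef_pV2 ?posrE ?invr_gt0 //; case/andP: N_bounds.
apply: le_trans (bi_holder_ge_mesh (X := N%:R^-1) (ltW Cg_gt0) g_holder beta_gt0 _ _ _ _).
- apply: (@le_trans _ _ (Cg^-1 * X `^ beta)).
    rewrite -powRrM mulVf ?lt0r_neq0 // powRr1; last by rewrite !mulr_ge0 ?(ltW Cg_gt0) ?(ltW r_gt0).
    rewrite (_ : Cg^-1 * (10 * Cg * r) = 10 * r); first by move: r_gt0; lra.
    by field; exact: lt0r_neq0.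
  rewrite ler_wpM2l ?invr_ge0 ?(ltW Cg_gt0) //.
  by apply: ge0_ler_powR; rewrite ?nnegrE ?invr_ge0 ?(ltW N_pos) ?(ltW X_gt0) ?(ltW beta_gt0).
- by rewrite invr_ge0 ltW.
- exact/grid_point_in01/ltnSE.
- exact/grid_point_in01/ltnSE.
- exact: grid_points_dist_ge.
Qed.

Lemma covering_curve_visits s : lipschitz01 s ->
  nbhd_closed (curve_image g) r `<=` nbhd_closed (s @` `[0, 1]) r ->
  exists2 K : nat, (0 < K)%N & forall j : 'I_N.+1,
    exists2 i, (i <= K)%N & eucl_dist (s (i%:R / K%:R)) (sample j) <= 2 * r.
Proof.
case=> L0 s_lip covers; set L := Num.max L0 1.
have L_ge1 : 1 <= L by rewrite le_max lexx orbT.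
have r2_gt0 : 0 < r / 2 by rewrite divr_gt0.
have L_le : forall x y, x \in `[0, 1] -> y \in `[0, 1] ->
    eucl_dist (s x) (s y) <= L * `|x - y|.
  by move=> x y x01 y01; rewrite (le_trans (s_lip _ _ x01 y01)) // ler_wpM2r ?le_max ?lexx.
pose K := (Num.truncn (2 * L / r)).+1.
have K_pos : (0 : R) < K%:R by rewrite ltr0n.
have LK : L * K%:R^-1 <= r / 2.
  have /andP[_] : (Num.truncn (2 * L / r))%:R <= 2 * L / r < K%:R.
    by apply: Num.Theory.truncn_itv; rewrite !divr_ge0 ?mulr_ge0 ?(ltW r_gt0); lra.
  by rewrite ltr_pdivrMr // ler_pdivrMr //; lra.
exists K => // j.
have : nbhd_closed (s @` `[0, 1]) r (sample j).
  apply/covers/(nbhd_closed_dist (a := sample j)); last by rewrite eucl_distxx ltW.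
  by exists ((j : nat)%:R / N%:R) => //; exact/grid_point_in01/ltnSE.
case/nbhd_closed_lt/(_ r2_gt0) => _ [t t01 <-] jt.
have [i iK ti] := nearest_grid_point (isT : (0 < K)%N) t01.
exists i => //; have := eucl_dist_triangle (s (i%:R / K%:R)) (s t) (sample j).
have := L_le _ _ t01 (grid_point_in01 R iK); rewrite eucl_distC.
have : L * `|t - i%:R / K%:R| <= L * K%:R^-1 by rewrite ler_wpM2l ?(le_trans ler01 L_ge1).
rewrite (eucl_distC (s t)); move: jt LK; lra.
Qed.

Lemma covering_curve_length s : lipschitz01 s ->
  nbhd_closed (curve_image g) r `<=` nbhd_closed (s @` `[0, 1]) r ->
  ((r * X^-1)%:E <= curve_length s)%E.
Proof.
move=> s_lip covers; have [K K_gt0 visits] := covering_curve_visits s_lip covers.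
have r2_gt0 : 0 < 2 * r by rewrite mulr_gt0.
have := walk_length_ge_visits r2_gt0 samples_separated visits.
rewrite card_ord => walk_ge; apply: le_trans (uniform_partition_le_length s K_gt0).
rewrite lee_fin; apply: le_trans walk_ge.
have N_ge1 : (1 : R) <= N%:R by rewrite ler1n.
move: N_bounds => /andP[_ /ltW/(ler_wpM2l (ltW r_gt0))].
have := ler_wpM2l (ltW r_gt0) N_ge1; rewrite -[N.+1%:R]natr1; move: r_gt0; lra.
Qed.

Lemma lower_bound : ((lower_const^-1 * r `^ ((beta - 1) / beta))%:E <=
  Lambda_hat (nbhd_closed (curve_image g) r) r)%E.
Proof.
apply: le_ereal_inf_tmp => _ [s [s_lip covers] <-].
apply: le_trans (covering_curve_length s_lip covers); rewrite lee_fin.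
have tenCg_ge0 : 0 <= 10 * Cg by rewrite mulr_ge0 ?(ltW Cg_gt0).
by rewrite powR_subn1_div ?lt0r_neq0 // (powRM _ tenCg_ge0 (ltW r_gt0)) invfM mulrCA.
Qed.

End LowerBound.

Theorem corollary3p8 (R : realType) :
  forall (beta Cg : R), 1 <= Cg ->
  exists r0 : R, 0 < r0 /\
  forall (alpha : R) (n : nat), 0 < alpha -> alpha <= beta -> alpha <= 1 ->
  exists C : R, 0 < C /\
  forall g : R -> 'rV[R]_n, bi_holder alpha beta Cg g ->
  forall r : R, 0 < r -> r < r0 ->
    ((C^-1 * r `^ ((beta - 1) / beta))%:E
       <= Lambda_hat (nbhd_closed (curve_image g) r) r)%E /\
    (Lambda_hat (nbhd_closed (curve_image g) r) r
       <= (C * r `^ ((alpha - 1) / alpha))%:E)%E.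
Proof.
move=> beta Cg Cg_ge1; have Cg_gt0 : 0 < Cg by lra.
exists (10 * Cg)^-1; split; first by rewrite invr_gt0 mulr_gt0.
move=> alpha n alpha_gt0 alpha_le_beta _; have beta_gt0 : 0 < beta by lra.
have lower_gt0 : 0 < lower_const beta Cg by rewrite powR_gt0 ?mulr_gt0.
have upper_gt0 := upper_const_gt0 n alpha Cg.
exists (upper_const n alpha Cg + lower_const beta Cg); split; first exact: addr_gt0.
move=> g g_holder r r_gt0 r_lt.
have r_small : 10 * Cg * r < 1 by rewrite -ltr_pdivlMl ?mulr_gt0 // mulr1.
have r_lt1 : r < 1 by move: r_small; nra.
split.
  apply: le_trans (lower_bound Cg_ge1 beta_gt0 g_holder r_gt0 r_small).
  by rewrite lee_fin ler_wpM2r ?powR_ge0 // lef_pV2 ?posrE ?addr_gt0 // lerDr ltW.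
apply: le_trans (upper_bound Cg_ge1 alpha_gt0 g_holder r_gt0 r_lt1) _.
by rewrite lee_fin ler_wpM2r ?powR_ge0 // lerDl ltW.
Qed.
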